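(* Let $p$ be a prime, $C\subseteq\mathbb{F}_p^{2n}$ a symplectic self-orthogonal code with stabilizer code $Q(C)\subseteq\mathbb{C}^{p^n}$, and $J\subsetneq\{1,\dots,n\}$. Let $\overline J=\{1,\dots,n\}\setminus J$, let $|\varphi\rangle\in Q(C)$ and $\sigma=\mathrm{tr}_{\overline J}[|\varphi\rangle\langle\varphi|]$. Let $Q(\sigma_J(C))\subseteq\mathbb{C}^{p^{|J|}}$ be the stabilizer code defined by the shortened code $\sigma_J(C)$, with the character chosen so that for every $\mathbf z\in\sigma_J(C)$ and the vector $\mathbf y\in C$ with $\pi_J(\mathbf y)=\mathbf z$ and zero coordinates outside $J$, $\lambda(E_{\mathbf z})=\lambda(E_{\mathbf y})$. Then the column space of $\sigma$ satisfies $\mathrm{col}(\sigma)\subseteq Q(\sigma_J(C))$.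
   Context: Vectors of $\mathbb{F}_p^{2m}$ are written $(\mathbf a|\mathbf b)$, $\mathbf a,\mathbf b\in\mathbb F_p^m$, with coordinate pairs $(a_j,b_j)$ indexed by a set of size $m$. The symplectic form is $(\mathbf a|\mathbf b)\cdot_s(\mathbf c|\mathbf d)=\mathbf a\cdot\mathbf d-\mathbf b\cdot\mathbf c$; $C^{\perp_s}$ is the dual, and $C$ is symplectic self-orthogonal if $C\subseteq C^{\perp_s}$. For $R\subseteq\{1,\dots,n\}$, $\pi_R(\mathbf a|\mathbf b)=(a_j|b_j)_{j\in R}$ and $\sigma_R(D)=\{\pi_R(\mathbf y):\mathbf y=(\mathbf a|\mathbf b)\in D,\ \mathrm{supp}(\mathbf a)\cup\mathrm{supp}(\mathbf b)\subseteq R\}$. Let $\xi=e^{2\pi\iota/p}$, $X(a)|x\rangle=|x+a\rangle$, $Z(b)|x\rangle=\xi^{bx}|x\rangle$ on $\mathbb C^p$, and $E_{(\mathbf a,\mathbf b)}=\bigotimes_j X(a_j)Z(b_j)$. For a symplectic self-orthogonal code $D\subseteq\mathbb F_p^{2m}$, the stabilizer code $Q(D)\subseteq\mathbb C^{p^m}$ is the common eigenspace $\{v:Ev=\lambda(E)v\ \forall E\in S\}$, where $S$ is the commutative group generated by scalars $\xi^\ell\mathcal I$ and the $E_{\mathbf y}$, $\mathbf y\in D$, and $\lambda$ is a character of $S$ with $\lambda(\xi\mathcal I)=\xi$. $\mathrm{tr}_{\overline J}$ is the partial trace over the qudits indexed by $\overline J$. *)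

From HB Require Import structures.
From mathcomp Require Import all_boot all_order all_algebra all_field.
Set Implicit Arguments. Unset Strict Implicit. Unset Printing Implicit Defensive.
Import GRing.Theory Num.Theory.
Local Open Scope ring_scope.

(* qudit index set I (a finite type); basis labels x in F_p^I *)
Definition lab (p : nat) (I : finType) := {ffun I -> 'F_p}.
Definition pvec (p : nat) (I : finType) := (lab p I * lab p I)%type.
(* dimension p^|I| of (C^p)^{\otimes I}; basis vector |x> has index enum_rank x *)
Definition dim (p : nat) (I : finType) := #|{: lab p I}|.
Definition op (p : nat) (I : finType) := 'M[algC]_(dim p I).
Definition ket (p : nat) (I : finType) := 'cV[algC]_(dim p I).

Definition dotp (p : nat) (I : finType) (a b : lab p I) : 'F_p := \sum_i a i * b i.
Definition symp (p : nat) (I : finType) (y z : pvec p I) : 'F_p :=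
  dotp y.1 z.2 - dotp y.2 z.1.

Definition is_code (p : nat) (I : finType) (C : {set pvec p I}) : Prop :=
  [/\ ([ffun=> 0], [ffun=> 0]) \in C,
      (forall y z, y \in C -> z \in C ->
         ([ffun i => y.1 i + z.1 i], [ffun i => y.2 i + z.2 i]) \in C) &
      (forall (c : 'F_p) y, y \in C -> ([ffun i => c * y.1 i], [ffun i => c * y.2 i]) \in C)].

Definition symp_self_orth (p : nat) (I : finType) (C : {set pvec p I}) : Prop :=
  forall y z, y \in C -> z \in C -> symp y z = 0.

(* E_(a,b) = (x) X(a_j) Z(b_j) : |x> |-> xi^{b.x} |x + a> *)
Definition pauliE (p : nat) (I : finType) (xi : algC) (y : pvec p I) : op p I :=
  \matrix_(r, c)
    ((((enum_val r : lab p I) == [ffun i => (enum_val c : lab p I) i + y.1 i]) %:R : algC)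
      * xi ^+ (nat_of_ord (dotp y.2 (enum_val c : lab p I)))).

(* S = group generated by scalars xi^l I and the E_y, y in D;
   its elements are exactly the xi^l E_y *)
Definition inS (p : nat) (I : finType) (xi : algC) (D : {set pvec p I}) (M : op p I) : Prop :=
  exists (l : nat) (y : pvec p I), y \in D /\ M = xi ^+ l *: pauliE xi y.

Definition is_char (p : nat) (I : finType) (xi : algC) (D : {set pvec p I})
    (lam : op p I -> algC) : Prop :=
  (forall M N, inS xi D M -> inS xi D N -> lam (M *m N) = lam M * lam N) /\
  lam (xi%:M) = xi.

Definition in_stabcode (p : nat) (I : finType) (xi : algC) (D : {set pvec p I})
    (lam : op p I -> algC) (v : ket p I) : Prop :=
  forall M, inS xi D M -> M *m v = lam M *: v.

Definition subJ (n : nat) (J : {set 'I_n}) := {i : 'I_n | i \in J}.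

Definition restrict (p n : nat) (J : {set 'I_n}) (x : lab p 'I_n) : lab p (subJ J) :=
  [ffun i => x (val i)].

Definition projJ (p n : nat) (J : {set 'I_n}) (y : pvec p 'I_n) : pvec p (subJ J) :=
  (restrict J y.1, restrict J y.2).

Definition supp_in (p n : nat) (J : {set 'I_n}) (y : pvec p 'I_n) : bool :=
  [forall i, (i \notin J) ==> (y.1 i == 0) && (y.2 i == 0)].

Definition shortened (p n : nat) (J : {set 'I_n}) (D : {set pvec p 'I_n}) : {set pvec p (subJ J)} :=
  [set projJ J y | y in [set y in D | supp_in J y]].

Definition ptrace (p n : nat) (J : {set 'I_n}) (rho : op p 'I_n) : op p (subJ J) :=
  \matrix_(r, c)
    \sum_(x : lab p 'I_n) \sum_(x' : lab p 'I_n |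
        [&& restrict J x == (enum_val r : lab p (subJ J)),
            restrict J x' == (enum_val c : lab p (subJ J)) &
            [forall i, (i \notin J) ==> (x i == x' i)]])
      rho (enum_rank x) (enum_rank x').

Definition ketbra (p n : nat) (phi : ket p 'I_n) : op p 'I_n :=
  phi *m (map_mx Num.conj phi)^T.

From Pilot Require Import Defs.
From HB Require Import structures.
From mathcomp Require Import all_boot all_order all_algebra all_field.
Import GRing.Theory Num.Theory.
Set Implicit Arguments. Unset Strict Implicit.
Local Open Scope ring_scope.

(* For y in C with support in J, E_y acts as E_(pi_J y) on the qudits of J and
   trivially on the others, so left multiplication by it commutes with the
   partial trace over the complement of J.  As phi is an eigenvector of E_y for
   lam(E_y), the reduced state sigma satisfies
   E_(pi_J y) sigma = lam(E_y) sigma = lamJ(E_(pi_J y)) sigma, hence every column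
   of sigma lies in the common eigenspace Q(sigma_J(C)); the scalars xi^l are
   handled by multiplicativity of lamJ. *)

Section PauliOperators.

Variables (p : nat) (I : finType) (xi : algC).

Let zero_pvec : pvec p I := ([ffun=> 0], [ffun=> 0]).

Lemma pauliE_mulmxE (y : pvec p I) m (A : 'M[algC]_(Defs.dim p I, m)) (x : lab p I) j :
  (pauliE xi y *m A) (enum_rank (x + y.1)) j =
  xi ^+ nat_of_ord (dotp y.2 x) * A (enum_rank x) j.
Proof.
rewrite mxE (bigD1 (enum_rank x)) //= big1 => [|k neq_kx].
  rewrite !mxE !enum_rankK addr0.
  have -> : [ffun i => x i + y.1 i] = x + y.1 by apply/ffunP => i; rewrite !ffunE.
  by rewrite eqxx mul1r.
rewrite !mxE enum_rankK; case: eqP => [x_eq|]; last by rewrite !mul0r.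
case/eqP: neq_kx; rewrite -(enum_valK k); congr enum_rank.
by apply: (addIr y.1); rewrite x_eq; apply/ffunP => i; rewrite !ffunE.
Qed.

Lemma pauliE0 : pauliE xi zero_pvec = 1%:M.
Proof.
apply/matrixP => r c; rewrite !mxE.
have -> : dotp zero_pvec.2 (enum_val c) = 0.
  by rewrite /dotp big1 // => i _; rewrite ffunE mul0r.
have -> : [ffun i => enum_val c i + zero_pvec.1 i] = enum_val c.
  by apply/ffunP => i; rewrite !ffunE addr0.
by rewrite (inj_eq enum_val_inj) expr0 mulr1.
Qed.

Lemma char_scale_pauliE (D : {set pvec p I}) (lam : op p I -> algC) (y : pvec p I) l :
  is_char xi D lam -> zero_pvec \in D -> y \in D ->
  lam (xi ^+ l *: pauliE xi y) = xi ^+ l * lam (pauliE xi y).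
Proof.
move=> [lamM lam_xi] D0 Dy; elim: l => [|l IHl]; first by rewrite scale1r mul1r.
have S_xi : inS xi D xi%:M by exists 1%N, zero_pvec; rewrite pauliE0 scalemx1.
have S_y : inS xi D (xi ^+ l *: pauliE xi y) by exists l, y.
by rewrite exprS -scalerA -mul_scalar_mx lamM // lam_xi IHl mulrA.
Qed.

Lemma in_stabcode_pauliE (D : {set pvec p I}) (lam : op p I -> algC) v y :
  in_stabcode xi D lam v -> y \in D -> pauliE xi y *m v = lam (pauliE xi y) *: v.
Proof. by move=> v_stab Dy; apply: v_stab; exists 0%N, y; rewrite scale1r. Qed.

Lemma in_stabcode_mulmx (D : {set pvec p I}) (lam : op p I -> algC) (A : op p I) w :
  (forall M, inS xi D M -> M *m A = lam M *: A) -> in_stabcode xi D lam (A *m w).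
Proof. by move=> A_eigen M S_M; rewrite mulmxA A_eigen // scalemxAl. Qed.

End PauliOperators.

Section PartialTrace.

Variables (p n : nat) (xi : algC) (J : {set 'I_n}).

Lemma dotp_restrict (b x : lab p 'I_n) :
  (forall i, i \notin J -> b i = 0) -> dotp (restrict J b) (restrict J x) = dotp b x.
Proof.
move=> b_supp; rewrite /dotp (bigID (mem J)) /= [X in _ + X]big1 ?addr0; last first.
  by move=> i /b_supp ->; rewrite mul0r.
by rewrite (big_sub (mem J)); apply: eq_bigr => i _; rewrite !ffunE.
Qed.

Lemma restrictD (a b : lab p 'I_n) : restrict J (a + b) = restrict J a + restrict J b.
Proof. by apply/ffunP => i; rewrite !ffunE. Qed.

Lemma ketbraE (phi : ket p 'I_n) i j : ketbra phi i j = phi i 0 * (phi j 0)^*.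
Proof. by rewrite /ketbra mxE big_ord1 !mxE. Qed.

Lemma ptrace_ketbra_eigen (y : pvec p 'I_n) (phi : ket p 'I_n) (c : algC) :
  supp_in J y -> pauliE xi y *m phi = c *: phi ->
  pauliE xi (projJ J y) *m ptrace J (ketbra phi) = c *: ptrace J (ketbra phi).
Proof.
move=> /forallP y_supp phi_eigen.
have y1_supp i : i \notin J -> y.1 i = 0 by move/(implyP (y_supp i)) => /andP[/eqP].
have y2_supp i : i \notin J -> y.2 i = 0 by move/(implyP (y_supp i)) => /andP[_ /eqP].
have phi_shift x : c * phi (enum_rank (x + y.1)) 0 =
                   xi ^+ nat_of_ord (dotp y.2 x) * phi (enum_rank x) 0.
  by rewrite -pauliE_mulmxE phi_eigen mxE.
apply/matrixP => r s; rewrite -(enum_valK r) -[enum_val r](subrK (projJ J y).1).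
set u := enum_val r - _; rewrite pauliE_mulmxE !mxE enum_rankK !mulr_sumr.
(* Substituting x + y.1 for x on the right moves the shift onto phi, where the
   eigen-equation turns it into the phase of E_(pi_J y). *)
rewrite [RHS](reindex_inj (addIr y.1)) /=; apply: eq_bigr => x _; rewrite !mulr_sumr.
apply: eq_big => [x'|x' /and3P[/eqP x_u _ _]].
  rewrite enum_rankK restrictD (inj_eq (addIr (restrict J y.1))); congr [&& _, _ & _].
  apply: eq_forallb => i; case: (boolP (i \in J)) => //= /y1_supp.
  by rewrite !ffunE => ->; rewrite addr0.
by rewrite !ketbraE !mulrA phi_shift -x_u dotp_restrict.
Qed.

Lemma projJ_shortened (C : {set pvec p 'I_n}) y :
  y \in C -> supp_in J y -> projJ J y \in shortened J C.
Proof. by move=> Cy y_supp; apply/imsetP; exists y; rewrite ?inE ?Cy. Qed.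

Lemma shortened0 (C : {set pvec p 'I_n}) :
  is_code C -> (([ffun=> 0], [ffun=> 0]) : pvec p (subJ J)) \in shortened J C.
Proof.
move=> [C0 _ _]; apply/imsetP; exists ([ffun=> 0], [ffun=> 0]).
  by rewrite inE C0; apply/forallP => i; rewrite !ffunE eqxx implybT.
by congr pair; apply/ffunP => i; rewrite !ffunE.
Qed.

End PartialTrace.

Theorem proposition12 (p n : nat) (xi : algC) (C : {set pvec p 'I_n})
    (lam : op p 'I_n -> algC) (J : {set 'I_n}) (lamJ : op p (subJ J) -> algC)
    (phi : ket p 'I_n) :
  prime p -> p.-primitive_root xi ->
  is_code C -> symp_self_orth C -> is_char xi C lam ->
  J \proper [set: 'I_n] ->
  in_stabcode xi C lam phi ->
  is_char xi (shortened J C) lamJ ->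
  (forall y, y \in C -> supp_in J y ->
     lamJ (pauliE xi (projJ J y)) = lam (pauliE xi y)) ->
  forall w : ket p (subJ J),
    in_stabcode xi (shortened J C) lamJ (ptrace J (ketbra phi) *m w).
Proof.
move=> _ _ C_code _ _ _ phi_stab lamJ_char lamJ_lam w.
apply: in_stabcode_mulmx => M [l [z [/imsetP[y]]]]; rewrite inE => /andP[Cy y_supp] -> ->.
rewrite -scalemxAl (ptrace_ketbra_eigen y_supp (in_stabcode_pauliE phi_stab Cy)).
by rewrite (char_scale_pauliE _ lamJ_char (shortened0 _ C_code)) ?projJ_shortened
  // lamJ_lam // scalerA.
Qed.
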